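(* Let $g:[0,\infty)\to[0,\infty)$ be a strictly increasing $C^1$ function with $g(0)=0$. Assume there is $a_*>0$ such that $c_0:=\min_{[0,a_*]}g'>0$ and $g$ restricted to $[a_*,\infty)$ is convex. Let $c_1=\max_{[0,a_*]}g'$ and $\gamma=c_1/c_0$. Then $$g(x)+g(y)\le g(x+\gamma y)\quad\text{for all }x,y\in[0,\infty).$$ *)

From Stdlib Require Import Reals.
Open Scope R_scope.

Definition right_deriv (g : R -> R) (x l : R) : Prop :=
  forall eps : R, 0 < eps -> exists delta : R, 0 < delta /\
    forall h : R, 0 < h < delta -> Rabs ((g (x + h) - g x) / h - l) < eps.

Definition is_deriv_on_nonneg (g g' : R -> R) : Prop :=
  right_deriv g 0 (g' 0) /\ forall x : R, 0 < x -> derivable_pt_lim g x (g' x).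

Definition continuous_on_nonneg (f : R -> R) : Prop :=
  forall x : R, 0 <= x -> forall eps : R, 0 < eps -> exists delta : R, 0 < delta /\
    forall y : R, 0 <= y -> Rabs (y - x) < delta -> Rabs (f y - f x) < eps.

Definition C1_nonneg (g g' : R -> R) : Prop :=
  is_deriv_on_nonneg g g' /\ continuous_on_nonneg g'.

Definition is_min_on (f : R -> R) (a b m : R) : Prop :=
  (exists t, a <= t <= b /\ f t = m) /\ (forall t, a <= t <= b -> m <= f t).
Definition is_max_on (f : R -> R) (a b m : R) : Prop :=
  (exists t, a <= t <= b /\ f t = m) /\ (forall t, a <= t <= b -> f t <= m).

Definition convex_on_from (f : R -> R) (a : R) : Prop :=
  forall x y t : R, a <= x -> a <= y -> 0 <= t <= 1 ->
    f (t * x + (1 - t) * y) <= t * f x + (1 - t) * f y.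

(* Put gap z := g (x + γ z) - g z.  Then gap 0 = g x, and gap is nondecreasing on
   (0, +oo): its derivative γ g'(x + γ z) - g'(z) is nonnegative, because g' >= c0
   everywhere (on [0, a*] by definition of c0, beyond a* since the derivative of a
   convex function is nondecreasing), so on [0, a*] we get γ g'(x + γ z) >= γ c0 = c1
   >= g'(z), while for z > a* convexity and γ >= 1 give g'(x + γ z) >= g'(z).
   Letting the left end point tend to 0 yields gap 0 <= gap y, i.e. the claim. *)

From Stdlib Require Import Reals Lra.
Open Scope R_scope.

Lemma derive_le_of_right_slopes_le (g : R -> R) (p l S d : R) :
  derivable_pt_lim g p l -> 0 < d ->
  (forall h, 0 < h <= d -> (g (p + h) - g p) / h <= S) -> l <= S.
Proof.
  intros Hd Hdpos HS; destruct (Rle_or_lt l S) as [Hle | Hlt]; [exact Hle |].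
  destruct (Hd (l - S)) as [[del Hdel] Hslope]; [lra |]; simpl in Hslope.
  set (h := Rmin (del / 2) d).
  assert (Hh : 0 < h <= Rmin (del / 2) d) by (unfold h; split; [apply Rmin_pos|]; lra).
  pose proof (Rmin_l (del / 2) d); pose proof (Rmin_r (del / 2) d).
  specialize (Hslope h ltac:(lra) ltac:(rewrite Rabs_right; lra)).
  specialize (HS h ltac:(lra)).
  revert Hslope; unfold Rabs; destruct Rcase_abs; lra.
Qed.

Lemma slopes_le_derive_of_left (g : R -> R) (q l S d : R) :
  derivable_pt_lim g q l -> 0 < d ->
  (forall h, 0 < h <= d -> S <= (g q - g (q - h)) / h) -> S <= l.
Proof.
  intros Hd Hdpos HS; destruct (Rle_or_lt S l) as [Hle | Hlt]; [exact Hle |].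
  destruct (Hd (S - l)) as [[del Hdel] Hslope]; [lra |]; simpl in Hslope.
  set (h := Rmin (del / 2) d).
  assert (Hh : 0 < h <= Rmin (del / 2) d) by (unfold h; split; [apply Rmin_pos|]; lra).
  pose proof (Rmin_l (del / 2) d); pose proof (Rmin_r (del / 2) d).
  specialize (Hslope (- h) ltac:(lra) ltac:(rewrite Rabs_Ropp, Rabs_right; lra)).
  specialize (HS h ltac:(lra)).
  replace ((g (q + - h) - g q) / - h) with ((g q - g (q - h)) / h) in Hslope
    by (replace (q + - h) with (q - h) by ring; field; lra).
  revert Hslope; unfold Rabs; destruct Rcase_abs; lra.
Qed.

Section ConvexSlopes.

Variables (g : R -> R) (a p q : R).
Hypotheses (Hconv : convex_on_from g a) (Hap : a <= p) (Hpq : p < q).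

Let ratio_in_unit (h : R) : 0 < h <= q - p -> 0 <= h / (q - p) <= 1.
Proof.
  intros Hh; split.
  - apply Rmult_le_pos; [lra | left; apply Rinv_0_lt_compat; lra].
  - apply Rmult_le_reg_r with (q - p); [lra |].
    unfold Rdiv; rewrite Rmult_assoc, Rinv_l; lra.
Qed.

Lemma convex_right_slope_le_chord (h : R) : 0 < h <= q - p ->
  (g (p + h) - g p) / h <= (g q - g p) / (q - p).
Proof.
  intros Hh; pose proof (Hconv q p _ ltac:(lra) Hap (ratio_in_unit h Hh)) as Hc.
  replace (h / (q - p) * q + (1 - h / (q - p)) * p) with (p + h) in Hc
    by (field; lra).
  apply Rmult_le_reg_r with h; [lra |].
  replace ((g (p + h) - g p) / h * h) with (g (p + h) - g p) by (field; lra).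
  replace ((g q - g p) / (q - p) * h) with (h / (q - p) * (g q - g p)) by (field; lra).
  lra.
Qed.

Lemma convex_chord_le_left_slope (h : R) : 0 < h <= q - p ->
  (g q - g p) / (q - p) <= (g q - g (q - h)) / h.
Proof.
  intros Hh; pose proof (Hconv p q _ Hap ltac:(lra) (ratio_in_unit h Hh)) as Hc.
  replace (h / (q - p) * p + (1 - h / (q - p)) * q) with (q - h) in Hc
    by (field; lra).
  apply Rmult_le_reg_r with h; [lra |].
  replace ((g q - g (q - h)) / h * h) with (g q - g (q - h)) by (field; lra).
  replace ((g q - g p) / (q - p) * h) with (h / (q - p) * (g q - g p)) by (field; lra).
  lra.
Qed.

End ConvexSlopes.

Lemma convex_derive_nondecreasing (g g' : R -> R) (a p q : R) :
  convex_on_from g a -> a <= p -> p <= q ->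
  derivable_pt_lim g p (g' p) -> derivable_pt_lim g q (g' q) -> g' p <= g' q.
Proof.
  intros Hc Hp Hpq Hdp Hdq; destruct (Req_dec p q) as [-> | Hneq]; [lra |].
  apply Rle_trans with ((g q - g p) / (q - p)).
  - apply (derive_le_of_right_slopes_le g p _ _ (q - p)); [exact Hdp | lra |].
    intros h Hh; apply (convex_right_slope_le_chord g a); auto; lra.
  - apply (slopes_le_derive_of_left g q _ _ (q - p)); [exact Hdq | lra |].
    intros h Hh; apply (convex_chord_le_left_slope g a); auto; lra.
Qed.

Lemma derivable_pt_lim_affine (b k c : R) : derivable_pt_lim (fun y => b + k * y) c k.
Proof.
  pose proof (derivable_pt_lim_plus (fct_cte b) (mult_real_fct k id) c _ _
    (derivable_pt_lim_const b c) (derivable_pt_lim_scal id k c _ (derivable_pt_lim_id c)))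
    as Hd.
  rewrite Rplus_0_l, Rmult_1_r in Hd; exact Hd.
Qed.

Lemma nondecreasing_of_derive_nonneg (f f' : R -> R) :
  (forall z, 0 < z -> derivable_pt_lim f z (f' z)) ->
  (forall z, 0 < z -> 0 <= f' z) ->
  forall s t, 0 < s -> s <= t -> f s <= f t.
Proof.
  intros Hd Hpos s t Hs Hst; destruct (Req_dec s t) as [-> | Hneq]; [lra |].
  destruct (MVT_cor2 f f' s t ltac:(lra)) as [c [Hmvt Hc]].
  - intros c Hc; apply Hd; lra.
  - pose proof (Hpos c ltac:(lra)); nra.
Qed.

Lemma right_deriv_right_continuous (g : R -> R) (x l : R) : right_deriv g x l ->
  forall eps, 0 < eps -> exists delta, 0 < delta /\
    forall h, 0 < h < delta -> Rabs (g (x + h) - g x) < eps.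
Proof.
  intros Hr eps Heps; destruct (Hr 1 Rlt_0_1) as [del [Hdel Hslope]].
  set (L := Rabs l + 1).
  assert (HL : 0 < L) by (unfold L; pose proof (Rabs_pos l); lra).
  exists (Rmin del (eps / L)); split; [apply Rmin_pos; [lra | apply Rdiv_lt_0_compat; lra] |].
  intros h [Hh0 Hh]; pose proof (Rmin_l del (eps / L)); pose proof (Rmin_r del (eps / L)).
  assert (Hquot : Rabs ((g (x + h) - g x) / h) < L).
  { pose proof (Rabs_triang ((g (x + h) - g x) / h - l) l) as Htri.
    replace ((g (x + h) - g x) / h - l + l) with ((g (x + h) - g x) / h) in Htri by ring.
    specialize (Hslope h ltac:(lra)); unfold L; lra. }
  replace (g (x + h) - g x) with ((g (x + h) - g x) / h * h) by (field; lra).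
  rewrite Rabs_mult, (Rabs_right h) by lra.
  apply Rlt_le_trans with (L * h); [nra |].
  apply Rle_trans with (L * (eps / L)); [nra | right; field; lra].
Qed.

Lemma le_of_nondecreasing_on_open_left (f : R -> R) (y : R) : 0 < y ->
  (forall eps, 0 < eps -> exists delta, 0 < delta /\
    forall s, 0 < s < delta -> f 0 - eps < f s) ->
  (forall s, 0 < s < y -> f s <= f y) -> f 0 <= f y.
Proof.
  intros Hy Hlsc Hmono; destruct (Rle_or_lt (f 0) (f y)) as [Hle | Hlt]; [exact Hle |].
  destruct (Hlsc (f 0 - f y)) as [del [Hdel Hnear]]; [lra |].
  pose proof (Rmin_l (del / 2) (y / 2)); pose proof (Rmin_r (del / 2) (y / 2)).
  set (s := Rmin (del / 2) (y / 2)) in *.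
  assert (Hs : 0 < s) by (unfold s; apply Rmin_pos; lra).
  specialize (Hnear s ltac:(lra)); specialize (Hmono s ltac:(lra)); lra.
Qed.

Section Superadditivity.

Variables (g g' : R -> R) (a c0 c1 : R).
Hypotheses (Hg0 : g 0 = 0)
  (Hmono : forall x y, 0 <= x -> x <= y -> g x <= g y)
  (Hright0 : right_deriv g 0 (g' 0))
  (Hderiv : forall x, 0 < x -> derivable_pt_lim g x (g' x))
  (Hconv : convex_on_from g a) (Ha : 0 < a)
  (Hmin : forall t, 0 <= t <= a -> c0 <= g' t) (Hc0 : 0 < c0)
  (Hmax : forall t, 0 <= t <= a -> g' t <= c1).

Let stretch := c1 / c0.

Let stretch_ge1 : 1 <= stretch.
Proof.
  assert (c0 <= c1) by (apply Rle_trans with (g' 0); [apply Hmin | apply Hmax]; lra).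
  apply Rmult_le_reg_r with c0; [lra |].
  unfold stretch; replace (c1 / c0 * c0) with c1 by (field; lra); lra.
Qed.

Let derive_ge_c0 (z : R) : 0 <= z -> c0 <= g' z.
Proof.
  intros Hz; destruct (Rle_or_lt z a) as [Hza | Hza]; [apply Hmin; lra |].
  apply Rle_trans with (g' a); [apply Hmin; lra |].
  apply (convex_derive_nondecreasing g g' a); try apply Hderiv; auto; lra.
Qed.

Let comparison_derive_nonneg (x z : R) : 0 <= x -> 0 < z ->
  0 <= g' (x + stretch * z) * stretch - g' z.
Proof.
  intros Hx Hz; pose proof stretch_ge1.
  assert (Hfar : c0 <= g' (x + stretch * z)) by (apply derive_ge_c0; nra).
  destruct (Rle_or_lt z a) as [Hza | Hza].
  - assert (g' z <= c1) by (apply Hmax; lra).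
    assert (stretch * c0 = c1) by (unfold stretch; field; lra); nra.
  - assert (g' z <= g' (x + stretch * z)); [| nra].
    apply (convex_derive_nondecreasing g g' a); try apply Hderiv; auto; nra.
Qed.

Lemma superadditive_stretch (x y : R) : 0 <= x -> 0 <= y ->
  g x + g y <= g (x + stretch * y).
Proof.
  intros Hx Hy; pose proof stretch_ge1.
  destruct (Req_dec y 0) as [-> | Hy0].
  { rewrite Rmult_0_r, Rplus_0_r, Hg0; lra. }
  set (gap z := g (x + stretch * z) - g z).
  assert (Hgap0 : gap 0 = g x) by (unfold gap; rewrite Rmult_0_r, Rplus_0_r, Hg0; ring).
  enough (gap 0 <= gap y) by (rewrite Hgap0 in *; unfold gap in *; lra).
  apply le_of_nondecreasing_on_open_left; [lra | |].
  - intros eps Heps; destruct (right_deriv_right_continuous g 0 _ Hright0 eps Heps)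
      as [del [Hdel Hnear]].
    exists del; split; [exact Hdel |]; intros s Hs.
    specialize (Hnear s Hs); rewrite Rplus_0_l, Hg0, Rminus_0_r in Hnear.
    assert (g x <= g (x + stretch * s)) by (apply Hmono; nra).
    rewrite Hgap0; revert Hnear; unfold gap, Rabs; destruct Rcase_abs; lra.
  - intros s Hs; apply (nondecreasing_of_derive_nonneg gap
      (fun z => g' (x + stretch * z) * stretch - g' z)); try lra.
    + intros z Hz; apply derivable_pt_lim_minus; [| apply Hderiv; lra].
      apply (derivable_pt_lim_comp (fun z => x + stretch * z) g).
      * apply derivable_pt_lim_affine.
      * apply Hderiv; nra.
    + intros z Hz; apply comparison_derive_nonneg; lra.
Qed.

End Superadditivity.

Theorem lemma5p3 (g g' : R -> R) (a_star c0 c1 : R)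
  (Hrange : forall x : R, 0 <= x -> 0 <= g x)
  (Hincr : forall x y : R, 0 <= x -> x < y -> g x < g y)
  (HC1 : C1_nonneg g g')
  (Hg0 : g 0 = 0)
  (Ha : 0 < a_star)
  (Hc0 : is_min_on g' 0 a_star c0)
  (Hc0pos : 0 < c0)
  (Hconv : convex_on_from g a_star)
  (Hc1 : is_max_on g' 0 a_star c1) :
  forall x y : R, 0 <= x -> 0 <= y -> g x + g y <= g (x + (c1 / c0) * y).
Proof.
  destruct HC1 as [[Hright0 Hderiv] _], Hc0 as [_ Hmin], Hc1 as [_ Hmax].
  apply (superadditive_stretch g g' a_star); auto.
  intros x y Hx Hxy; destruct (Req_dec x y) as [-> | Hneq]; [lra |].
  left; apply Hincr; lra.
Qed.
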